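(* Let $T_0,T$ be spanning trees of $G$ and $M_0=M_{T_0}$. Then $\Psi_{M_0}(M_T)$ is the class in $K(G^+)$ of the divisor $\chi\in\mathbb Z^W$ with $\chi(w_e)=1$ if the edge $e$ of $G$ has different directions in $O_{T_0}$ and $O_T$, and $\chi(w_e)=0$ otherwise.
   Context: $G$ is a finite connected planar graph (multi-edges allowed, no loops) with a fixed embedding in the plane, and $q$ is a fixed vertex of $G$ lying on the boundary of the infinite (outer) face. Let $G^\vee$ be the planar dual and $q^*$ the dual vertex of the outer face. Superimpose $G$ and $G^\vee$ so that each edge $e$ of $G$ crosses exactly its dual edge $e^*$, place a new vertex $w_e$ at each crossing, so each edge of $G$ and of $G^\vee$ is split into two half-edges; then delete $q$, $q^*$ and all half-edges incident to them. The resulting planar bipartite graph is $G^+$, with white vertices $W=\{w_e: e\in E(G)\}$ and black vertices the vertices of $G$ other than $q$ and the bounded faces of $G$. For a spanning tree $T$ of $G$, the orientation $O_T$ of $G$ orients each edge of $T$ away from $q$ and each edge $e\notin T$ counterclockwise around the unique cycle in $T\cup\{e\}$. Given an orientation $O$ of $G$, the induced orientation $\widehat O$ of $G^+$ is: each half-edge of an edge $e$ of $G$ is oriented in the direction of $e$ in $O$; each half-edge of a dual edge $e^*$ is oriented as the $90^\circ$ counterclockwise rotation of the $O$-direction of $e$. An edge of $G^+$ is positively oriented if it points from its white endpoint to its black endpoint, negatively oriented otherwise. The Temperley matching $M_T$ consists of, for each $e\in T$, the positively oriented (in $\widehat{O_T}$) half-edge of $e$ at $w_e$, and for each $e\notin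 T$, the positively oriented half-edge of $e^*$ at $w_e$. Kasteleyn cokernel: for a $q$-connected orientation $O$ and each black vertex $b$ let $r_b\in\mathbb Z^W$ have $w$-coordinate equal to (number of edges between $w$ and $b$ oriented $w\to b$ in $\widehat O$) minus (number oriented $b\to w$). $\mathrm{Prin}(G^+)$ is the subgroup of $\mathbb Z^W$ generated by the $r_b$, and $K(G^+)=\mathbb Z^W/\mathrm{Prin}(G^+)$. For a reference perfect matching $M_0=M_{T_0}$, use the orientation $\widehat{O_{T_0}}$. For a perfect matching $M$, $M_0\triangle M$ is a disjoint union of cycles; define $d\in\mathbb Z^W$ by $d(w)=1$ if $w$ lies on $M_0\triangle M$ and its two incident edges in $M_0\triangle M$ have opposite orientations (one positively, one negatively oriented), and $d(w)=0$ otherwise; $\Psi_{M_0}(M)=[d]\in K(G^+)$. *)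

(* Plane graphs are encoded as combinatorial maps (rotation systems). *)
From HB Require Import structures.
From mathcomp Require Import all_boot all_order all_algebra all_fingroup.
Set Implicit Arguments. Unset Strict Implicit. Unset Printing Implicit Defensive.
Import GRing.Theory Num.Theory.
Local Open Scope ring_scope.

Section PlaneGraph.
(* V : vertices, E : edges, F : faces of G.  A dart of G is a pair (e, b) :
   an edge together with one of its two ends.  [tl d] is the vertex the dart
   d leaves from (for d = (e,b), the dart goes from tl (e,b) to tl (e,~~b));
   [lf d] is the face lying to the LEFT of the dart d.  [s] is the
   counterclockwise rotation of darts around their common origin vertex. *)
Variables (V E F : finType) (tl : E * bool -> V) (lf : E * bool -> F)
          (s : {perm (E * bool)}) (q : V) (fout : F).

Definition flip (d : E * bool) : E * bool := (d.1, ~~ d.2).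
(* face permutation: the next dart along the boundary of the face on the left *)
Definition phi (d : E * bool) : E * bool := (s^-1)%g (flip d).

Definition adjE (A : {set E}) : rel V := fun u v =>
  [exists e : E, (e \in A) &&
     (((tl (e, true) == u) && (tl (e, false) == v)) ||
      ((tl (e, true) == v) && (tl (e, false) == u)))].

Definition fadj (C : {set E}) : rel F := fun f g =>
  [exists e : E, (e \notin C) &&
     (((lf (e, true) == f) && (lf (e, false) == g)) ||
      ((lf (e, true) == g) && (lf (e, false) == f)))].

(* G is a finite connected plane graph without loops (multi-edges allowed),
   with outer face fout and q a vertex on the boundary of fout. *)
Definition plane_map : Prop :=
  (* vertices are exactly the s-orbits of darts *)
  (forall d, tl (s d) = tl d) /\
  (forall d d', tl d = tl d' -> fconnect s d d') /\
  (* faces are exactly the phi-orbits of darts *)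
  (forall d, lf (phi d) = lf d) /\
  (forall d d', lf d = lf d' -> fconnect phi d d') /\
  ((forall f, exists d, lf d = f) \/ #|E| = 0%N) /\
  (forall e, tl (e, true) != tl (e, false)) /\
  (forall u v, connect (adjE [set: E]) u v) /\
  (* Euler's formula: genus 0, i.e. the rotation system is planar *)
  (#|V| + #|F| = #|E| + 2)%N /\
  ((exists d, lf d = fout /\ tl d = q) \/ #|E| = 0%N).

Definition spanning_tree (T : {set E}) : Prop :=
  (forall u v, connect (adjE T) u v) /\
  (forall e, e \in T -> ~~ connect (adjE (T :\ e)) (tl (e, true)) (tl (e, false))).

(* edge set of the unique cycle of T + e (e not in T) *)
Definition fund_cycle (T : {set E}) (e : E) : {set E} :=
  e |: [set e' in T | ~~ connect (adjE (T :\ e')) (tl (e, true)) (tl (e, false))].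

(* An orientation O : E -> bool orients e as the dart (e, O e),
   i.e. from tl (e, O e) to tl (e, ~~ O e). *)
(* O_T : edges of T away from q; e not in T counterclockwise around its
   fundamental cycle, i.e. with the interior (bounded side) of the cycle on
   its left.  Interior faces = faces not joined to the outer face in the dual
   without crossing the cycle. *)
Definition O_T (T : {set E}) (e : E) : bool :=
  if e \in T then connect (adjE (T :\ e)) q (tl (e, true))
  else ~~ connect (fadj (fund_cycle T e)) fout (lf (e, true)).

(* Half-edges of G^+ : (e, isdual, b).
   isdual = false : half of e between w_e and the vertex tl (e,b);
   isdual = true  : half of e^* between w_e and the face lf (e,b). *)
Definition halfedge := (E * bool * bool)%type.

Definition hwhite (h : halfedge) : E := h.1.1.
Definition hblack (h : halfedge) : V + F :=
  if h.1.2 then inr (lf (h.1.1, h.2)) else inl (tl (h.1.1, h.2)).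

(* black vertices of G^+ : vertices other than q, bounded faces *)
Definition valid_black (x : V + F) : bool :=
  match x with inl v => v != q | inr f => f != fout end.

(* h is positively oriented (white -> black) in the induced orientation hat O *)
Definition hpos (O : E -> bool) (h : halfedge) : bool :=
  if h.1.2 then h.2 == O h.1.1 else h.2 != O h.1.1.

Definition temperley (T : {set E}) : {set halfedge} :=
  [set h : halfedge | (if hwhite h \in T then ~~ h.1.2 else h.1.2) && hpos (O_T T) h].

Definition rvec (O : E -> bool) (x : V + F) (w : E) : int :=
  \sum_(h : halfedge | (hwhite h == w) && (hblack h == x))
     (if hpos O h then 1 else -1).

(* membership in Prin(G^+) = subgroup of Z^W generated by the r_b *)
Definition in_Prin (O : E -> bool) (z : E -> int) : Prop :=
  exists c : V + F -> int,
    forall w, z w = \sum_(x : V + F | valid_black x) c x * rvec O x w.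

Definition psi_div (O0 : E -> bool) (M0 M : {set halfedge}) (w : E) : int :=
  let S := (M0 :\: M) :|: (M :\: M0) in
  if [exists h1 : halfedge, exists h2 : halfedge,
        [&& h1 \in S, h2 \in S, hwhite h1 == w, hwhite h2 == w &
            hpos O0 h1 != hpos O0 h2]] then 1 else 0.

Definition chi_div (O0 O : E -> bool) (w : E) : int :=
  if O0 w != O w then 1 else 0.

End PlaneGraph.

(* Both Temperley matchings consist of positively oriented half-edges, M_{T_0} for the
   orientation induced by O_{T_0} and M_T for the one induced by O_T.  Changing the
   orientation of e reverses exactly the half-edges at w_e.  So if e has the same
   direction in O_{T_0} and O_T, every half-edge of M_{T_0} ∆ M_T at w_e is positive and
   d(w_e) = 0; otherwise the M_T-edge at w_e is negative for O_{T_0}, hence differs from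
   the (positive) M_{T_0}-edge, and d(w_e) = 1.  Thus d = chi already in Z^W, whatever the trees and the
   plane graph. *)
From HB Require Import structures.
From mathcomp Require Import all_boot all_order all_algebra all_fingroup.
Set Implicit Arguments. Unset Strict Implicit. Unset Printing Implicit Defensive.
Import GRing.Theory Num.Theory.
Local Open Scope ring_scope.

Section Matchings.
Variable E : finType.
Implicit Types (O t : E -> bool) (h : halfedge E) (w : E).

Definition pos_matching t O : {set halfedge E} :=
  [set h | (h.1.2 == t (hwhite h)) && hpos O h].

Lemma hpos_reorient O0 O h :
  hpos O h = hpos O0 h (+) (O0 (hwhite h) != O (hwhite h)).
Proof. by rewrite /hpos /hwhite; case: h.1.2; case: h.2; case: (O0 _); case: (O _). Qed.

Definition pos_halfedge O (isdual : bool) w : halfedge E :=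
  (w, isdual, if isdual then O w else ~~ O w).

Lemma pos_halfedge_in t O w : pos_halfedge O (t w) w \in pos_matching t O.
Proof. by rewrite inE /hpos /hwhite /=; case: (t w); case: (O w). Qed.

Lemma psi_div_pos_matching O0 O t0 t w :
  psi_div O0 (pos_matching t0 O0) (pos_matching t O) w = chi_div O0 O w.
Proof.
set M0 := pos_matching t0 O0; set M := pos_matching t O.
rewrite /psi_div /chi_div; have [flip_w | same_w] := boolP (O0 w != O w).
  set h0 := pos_halfedge O0 (t0 w) w; set h := pos_halfedge O (t w) w.
  have h0_M0 : h0 \in M0 := pos_halfedge_in t0 O0 w.
  have h_M : h \in M := pos_halfedge_in t O w.
  have h0_pos : hpos O0 h0 by move: h0_M0; rewrite inE => /andP[].
  have h_pos : hpos O h by move: h_M; rewrite inE => /andP[].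
  have h0_negO : ~~ hpos O h0 by rewrite (hpos_reorient O0) h0_pos flip_w.
  have h_negO0 : ~~ hpos O0 h by rewrite (hpos_reorient O) h_pos eq_sym flip_w.
  have h0_M : h0 \notin M by rewrite inE (negbTE h0_negO) andbF.
  have h_M0 : h \notin M0 by rewrite inE (negbTE h_negO0) andbF.
  rewrite ifT //; apply/existsP; exists h0; apply/existsP; exists h.
  by rewrite !in_setU !in_setD h0_M0 h_M0 h_M h0_M h0_pos (negbTE h_negO0) !eqxx.
rewrite negbK in same_w; rewrite ifF //; apply/existsP => -[h1 /existsP [h2]].
have pos_at_w h : hwhite h == w -> h \in (M0 :\: M) :|: (M :\: M0) -> hpos O0 h.
  move=> /eqP hw; rewrite in_setU !in_setD => /orP[] /andP[_]; rewrite inE => /andP[_] //.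
  by rewrite (hpos_reorient O0) hw same_w addbF.
by case/and5P => S1 S2 w1 w2; rewrite (pos_at_w _ w1 S1) (pos_at_w _ w2 S2).
Qed.

End Matchings.

Lemma temperleyE (V E F : finType) (tl : E * bool -> V) (lf : E * bool -> F)
    (q : V) (fout : F) (T : {set E}) :
  temperley tl lf q fout T = pos_matching (fun e => e \notin T) (O_T tl lf q fout T).
Proof. by apply/setP => h; rewrite !inE /hwhite; case: (h.1.1 \in T); case: h.1.2. Qed.

Lemma in_Prin_eq0 (V E F : finType) (tl : E * bool -> V) (lf : E * bool -> F)
    (q : V) (fout : F) (O : E -> bool) (z : E -> int) :
  (forall w, z w = 0) -> in_Prin tl lf q fout O z.
Proof. by move=> z0; exists (fun=> 0) => w; rewrite z0 big1 // => x _; rewrite mul0r. Qed.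

Theorem lemma3p3 (V E F : finType) (tl : E * bool -> V) (lf : E * bool -> F)
    (s : {perm (E * bool)}) (q : V) (fout : F) (T0 T : {set E}) :
  plane_map tl lf s q fout ->
  spanning_tree tl T0 -> spanning_tree tl T ->
  in_Prin tl lf q fout (O_T tl lf q fout T0)
    (fun w => psi_div (O_T tl lf q fout T0)
                 (temperley tl lf q fout T0) (temperley tl lf q fout T) w
              - chi_div (O_T tl lf q fout T0) (O_T tl lf q fout T) w).
Proof.
move=> _ _ _; apply: in_Prin_eq0 => w.
by rewrite !temperleyE psi_div_pos_matching subrr.
Qed.
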